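(* Let $\mathcal{J}\in\{\mathcal{F},\mathcal{I},\mathcal{I}_1,\mathcal{C},\mathcal{C}_v\}$. If $M\in\mathcal{J}$ then $M\cup\{2\}\in\mathcal{J}$.
   Context: For a summable sequence $\mathbf{x}=(x_n)$ of positive reals (finite sequences are allowed and are identified with eventually-zero sequences), the achievement set is $\mathcal{A}(\mathbf{x})=\{\sum_{n\in A}x_n : A\subseteq\mathbb{N}\}$. The cardinal function $f_{\mathbf{x}}:\mathcal{A}(\mathbf{x})\to\{1,2,3,\dots\}\cup\{\omega,\mathfrak{c}\}$ sends $x$ to the number (cardinality) of $0$–$1$ sequences $(\varepsilon_n)$, indexed by the nonzero terms, with $\sum\varepsilon_n x_n=x$. Families of sets: $\mathcal{F}$ = ranges of cardinal functions of finite sequences; $\mathcal{I}$ = ranges of cardinal functions of sequences whose achievement set is a finite union of (nondegenerate) closed intervals; $\mathcal{I}_1$ = ranges of cardinal functions of sequences whose achievement set is a single closed interval; $\mathcal{C}$ = ranges for sequences whose achievement set is a Cantor set; $\mathcal{C}_v$ = ranges for sequences whose achievement set is a Cantorval (a nonempty compact subset of $\mathbb{R}$ equal to the closure of its interior such that both endpoints of every nontrivial connected component are accumulation points of one-point components). *)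

From HB Require Import structures.
From mathcomp Require Import all_boot all_order all_algebra.
From mathcomp Require Import all_classical all_reals all_analysis.
Set Implicit Arguments. Unset Strict Implicit. Unset Printing Implicit Defensive.
Import Order.TTheory GRing.Theory Num.Theory.
Import numFieldNormedType.Exports.
Local Open Scope classical_set_scope.
Local Open Scope ring_scope.

Inductive card_val : Type := CFin of nat | COmega | CContinuum.

Definition card_is (T : Type) (S : set T) (c : card_val) : Prop :=
  match c with
  | CFin n => (S #= `I_n)%card
  | COmega => (S #= [set: nat])%card
  | CContinuum => (S #= [set: nat -> bool])%card
  end.

Section Achievement.
Variable R : realType.

(* An admissible sequence: either an infinite sequence of positive reals, or a
   finite sequence (x_0,...,x_{k-1}) of positive reals identified with the
   eventually-zero sequence (x_0,...,x_{k-1},0,0,...). *)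
Definition finite_seq (x : nat -> R) : Prop :=
  exists k : nat, forall n, ((n < k)%N -> 0 < x n) /\ ((k <= n)%N -> x n = 0).

Definition admissible (x : nat -> R) : Prop :=
  (forall n, 0 < x n) \/ finite_seq x.

Definition summable (x : nat -> R) : Prop :=
  exists l : R, series x @ \oo --> l.

(* 0-1 sequences indexed by the nonzero terms of x (encoded as nat -> bool
   vanishing off the support of x) with sum_n eps_n x_n = a. *)
Definition reps (x : nat -> R) (a : R) : set (nat -> bool) :=
  [set e | (forall n, x n = 0 -> e n = false) /\
           series (fun n => (e n)%:R * x n) @ \oo --> a].

Definition achievement (x : nat -> R) : set R :=
  [set a | exists e, reps x a e].

Definition cardinal_range (x : nat -> R) : set card_val :=
  [set c | exists2 a, achievement x a & card_is (reps x a) c].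

Definition finite_union_intervals (A : set R) : Prop :=
  exists s : seq (R * R), s != [::] /\ all (fun p => p.1 < p.2) s /\
    A = [set t | has (fun p => (p.1 <= t) && (t <= p.2)) s].

Definition single_interval (A : set R) : Prop :=
  exists a b : R, a < b /\ A = `[a, b]%classic.

Definition cantor_set (A : set R) : Prop :=
  A !=set0 /\ compact A /\ perfect_set A /\ interior A = set0.

Definition one_point_components (A : set R) : set R :=
  [set t | A t /\ connected_component A t = [set t]].

Definition cantorval (A : set R) : Prop :=
  A !=set0 /\ compact A /\ A = closure (interior A) /\
  forall t c d, A t -> connected_component A t = `[c, d]%classic -> c < d ->
    limit_point (one_point_components A) c /\
    limit_point (one_point_components A) d.

End Achievement.

Inductive family : Type := FamF | FamI | FamI1 | FamC | FamCv.

Definition family_cond (R : realType) (J : family) (x : nat -> R) : Prop :=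
  match J with
  | FamF => finite_seq x
  | FamI => finite_union_intervals (achievement x)
  | FamI1 => single_interval (achievement x)
  | FamC => cantor_set (achievement x)
  | FamCv => cantorval (achievement x)
  end.

Definition in_family (R : realType) (J : family) (M : set card_val) : Prop :=
  exists x : nat -> R, [/\ admissible x, summable x, family_cond J x &
                          cardinal_range x = M].

(* Let x have sum S.  If S > 0, prepend S: for y = (S, x_0, x_1, ...) we get
   A(y) = A(x) u (S + A(x)), and since A(x) lies in [0, S] and contains 0 and S,
   the two copies meet only at S.  The point S has exactly two y-expansions
   (0 followed by all the nonzero terms of x, or 1 followed by zeros), every other
   point of A(y) has as many y-expansions as its unique preimage has x-expansions,
   and the value f_x(S) = 1 is still taken by f_y at 0; hence the range of f_y is
   that of f_x together with 2.  Gluing A(x) to its translate by S at the common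
   point S preserves being a finite union of intervals, an interval, a Cantor set
   and a Cantorval.  If S = 0 then A(x) = {0}, which forces the family F, and the
   sequence (1, 1) does the job. *)

From HB Require Import structures.
From mathcomp Require Import all_boot all_order all_algebra.
From mathcomp Require Import all_classical all_reals all_analysis.
From mathcomp Require Import lra.
Set Implicit Arguments. Unset Strict Implicit. Unset Printing Implicit Defensive.
Import Order.TTheory GRing.Theory Num.Theory.
Import numFieldNormedType.Exports.
Local Open Scope classical_set_scope.
Local Open Scope ring_scope.

Lemma card_is_card_eq T U (A : set T) (B : set U) c :
  (A #= B)%card -> card_is B c -> card_is A c.
Proof. by case: c => [n||] /= AB; apply: card_eq_trans AB. Qed.

Lemma infinite_bool_seq : infinite_set [set: nat -> bool].
Proof.
apply/infiniteP/pcard_injP; exists (fun n m => n == m) => n m _ _ /(congr1 (@^~ m)).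
by rewrite eqxx => /eqP.
Qed.

Lemma card_is_finite T (A : set T) n c : (A #= `I_n)%card -> card_is A c -> c = CFin n.
Proof.
move=> An; case: c => [m||] /= Ac.
- by congr CFin; apply/card_eq_II; exact: card_eq_trans (card_esym Ac) An.
- by case: infinite_nat; rewrite -(eq_finite_set Ac) (eq_finite_set An); exact: finite_II.
- case: infinite_bool_seq.
  by rewrite -(eq_finite_set Ac) (eq_finite_set An); exact: finite_II.
Qed.

Lemma card_set2 T (t1 t2 : T) : t1 <> t2 -> ([set t1; t2] #= `I_2)%card.
Proof.
move=> t12; apply/eq_cardSP; exists t1; first by left.
suff -> : [set t1; t2] `\ t1 = [set t2] by exact: card_set1.
apply/seteqP; split=> [z [[->|->] //] t1t1|z ->]; first by case: t1t1.
by split; [right|move=> /esym].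
Qed.

Section Prepend.
Variable R : realType.
Implicit Types (x : nat -> R) (e : nat -> bool) (a c : R).

Definition prepend c x : nat -> R := fun n => if n is m.+1 then x m else c.

Definition bcons (b : bool) e : nat -> bool := fun n => if n is m.+1 then e m else b.

Lemma bcons_eta e : e = bcons (e 0%N) (fun n => e n.+1).
Proof. by apply/funext; case. Qed.

Lemma bcons_inj b : injective (bcons b).
Proof. by move=> e1 e2 /(congr1 (fun f n => f n.+1)). Qed.

Lemma series_recl (u : nat -> R) l :
  series u @ \oo --> l <-> series (fun n => u n.+1) @ \oo --> l - u 0%N.
Proof.
rewrite -cvg_shiftS.
have -> : [sequence series u n.+1]_n = (fun n => u 0%N + series (fun n => u n.+1) n).
  by apply/funext => n /=; rewrite /series /= big_nat_recl.
split=> [/cvgB /(_ (cvg_cst (u 0%N)))|/(cvgD (cvg_cst (u 0%N)))].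
  by under eq_cvg do rewrite addrC addKr.
by rewrite subrKC.
Qed.

Definition translate c (E : set R) : set R := [set z | E (z - c)].

Lemma reps_prepend c x a b e : c != 0 ->
  reps (prepend c x) a (bcons b e) <-> reps x (a - b%:R * c) e.
Proof.
move=> c0; rewrite /reps /=; split=> -[supp sum]; split.
- by move=> n /(supp n.+1).
- by move/series_recl: sum.
- by case=> [/eqP|n /supp]; rewrite ?(negbTE c0).
- exact/series_recl.
Qed.

Lemma reps_prependE c x a : c != 0 ->
  reps (prepend c x) a = bcons false @` reps x a `|` bcons true @` reps x (a - c).
Proof.
move=> c0; apply/seteqP; split=> [e|e [[e' + <-]|[e' + <-]]]; last 2 first.
- by move=> ?; apply/reps_prepend; rewrite ?mul0r ?subr0.
- by move=> ?; apply/reps_prepend; rewrite ?mul1r.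
rewrite [e]bcons_eta; case: (e 0%N) => /reps_prepend => /(_ c0).
  by rewrite mul1r => ?; right; exists (fun n => e n.+1).
by rewrite mul0r subr0 => ?; left; exists (fun n => e n.+1).
Qed.

Lemma achievement_prependE c x : c != 0 ->
  achievement (prepend c x) = achievement x `|` translate c (achievement x).
Proof.
move=> c0; apply/seteqP; split=> a; rewrite /achievement /translate /= ?reps_prependE //.
  by case=> e [[e' ? _]|[e' ? _]]; [left|right]; exists e'.
by case=> -[e' ?]; [exists (bcons false e'); left|exists (bcons true e'); right];
  exists e'.
Qed.

Lemma card_reps_prepend_l c x a : c != 0 -> ~ achievement x (a - c) ->
  (reps (prepend c x) a #= reps x a)%card.
Proof.
move=> c0 xac; rewrite reps_prependE //.
have -> : reps x (a - c) = set0 by apply/seteqP; split=> // e ?; apply: xac; exists e.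
rewrite image_set0 setU0.
by apply: inj_card_eq => e1 e2 _ _; apply: bcons_inj.
Qed.

Lemma card_reps_prepend_r c x a : c != 0 -> ~ achievement x a ->
  (reps (prepend c x) a #= reps x (a - c))%card.
Proof.
move=> c0 xa; rewrite reps_prependE //.
have -> : reps x a = set0 by apply/seteqP; split=> // e ?; apply: xa; exists e.
rewrite image_set0 set0U.
by apply: inj_card_eq => e1 e2 _ _; apply: bcons_inj.
Qed.

Lemma card_reps_prepend c x a : c != 0 -> achievement (prepend c x) a ->
  ~ (achievement x a /\ achievement x (a - c)) ->
  exists2 a', achievement x a' & (reps (prepend c x) a #= reps x a')%card.
Proof.
move=> c0; rewrite achievement_prependE // => -[xa|xac] not_both.
  by exists a => //; apply: card_reps_prepend_l => // xac; apply: not_both.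
by exists (a - c) => //; apply: card_reps_prepend_r => // xa; apply: not_both.
Qed.

Lemma cardinal_range_prepend_disjoint c x : c != 0 ->
  (forall a, achievement x a -> ~ achievement x (a - c)) ->
  cardinal_range (prepend c x) = cardinal_range x.
Proof.
move=> c0 disj; apply/seteqP; split=> k [a ya ak].
  have [|a' xa' ya_xa'] := card_reps_prepend c0 ya; first by case=> /disj.
  by exists a' => //; apply: card_is_card_eq ak; apply: card_esym.
exists a; first by rewrite achievement_prependE //; left.
by apply: card_is_card_eq ak; apply: card_reps_prepend_l => //; apply: disj.
Qed.

End Prepend.

Lemma nneg_series_cvg0_eq0 (R : realType) (u : nat -> R) : (forall n, 0 <= u n) ->
  series u @ \oo --> 0 -> forall n, u n = 0.
Proof.
move=> u_ge0 u0 n; apply/eqP; rewrite eq_le u_ge0 andbT; apply: (cvgr_to_ge u0).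
near=> m; have : series u n.+1 <= series u m.
  by apply: (nondecreasing_series (P := predT)) => //; near: m; exists n.+1.
rewrite -(seriesSB u n) lerBlDr => /le_trans; apply.
by rewrite lerDl; apply: sumr_ge0.
Unshelve. all: by end_near. Qed.

Section NonnegSeries.
Variables (R : realType) (x : nat -> R) (S : R).
Hypothesis x_ge0 : forall n, 0 <= x n.
Hypothesis x_sum : series x @ \oo --> S.

Lemma achievement_ge0_le a : achievement x a -> 0 <= a <= S.
Proof.
case=> e [_ xe]; apply/andP; split.
  apply: (cvgr_to_ge xe); near=> n; apply: sumr_ge0 => k _.
  exact: mulr_ge0.
apply: (ler_cvg_to xe x_sum); near=> n; apply: ler_sum => k _.
by case: (e k); rewrite ?mul1r ?mul0r.
Unshelve. all: by end_near. Qed.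

Lemma reps0E : reps x 0 = [set fun _ => false].
Proof.
apply/seteqP; split=> [e [supp xe]|e ->]; last first.
  split=> //; rewrite (_ : series _ = fun _ => 0); first exact: cvg_cst.
  by apply/funext => n; rewrite /series /= big1 // => k _; rewrite mul0r.
have ex_ge0 k : 0 <= (e k)%:R * x k by apply: mulr_ge0.
apply/funext => n; have := nneg_series_cvg0_eq0 ex_ge0 xe n.
by case: (e n) (supp n) => //=; rewrite mul1r => xn0 /xn0.
Qed.

Lemma reps_sumE : reps x S = [set fun n => x n != 0].
Proof.
apply/seteqP; split=> [e [supp xe]|e ->]; last first.
  split=> [n ->|]; first by rewrite eqxx.
  rewrite (_ : (fun n => _) = x) //.
  by apply/funext => n; case: eqP => [->|_]; rewrite ?mulr0 ?mul1r.
apply/funext => n; set u := fun k => x k - (e k)%:R * x k.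
have u_ge0 k : 0 <= u k by rewrite /u subr_ge0; case: (e k); rewrite ?mul1r ?mul0r.
have u0 : series u @ \oo --> 0.
  rewrite (_ : series u = series x - series (fun k => (e k)%:R * x k)).
    by rewrite -(subrr S); apply: cvgB.
  by apply/funext => k; rewrite /series /= sumrB.
have := nneg_series_cvg0_eq0 u_ge0 u0 n; rewrite /u.
case: (e n) (supp n) => /=; rewrite ?mul1r ?mul0r ?subr0.
  by move=> xn0 _; case: eqP => // /xn0.
by move=> _ ->; rewrite eqxx.
Qed.

Lemma achievement0 : achievement x 0.
Proof. by exists (fun _ => false); rewrite reps0E. Qed.

Lemma achievement_sum : achievement x S.
Proof. by exists (fun n => x n != 0); rewrite reps_sumE. Qed.

Lemma achievement_overlap_sum a : achievement x a -> achievement x (a - S) -> a = S.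
Proof.
move=> /achievement_ge0_le/andP[_ aS] /achievement_ge0_le/andP[+ _].
by rewrite subr_ge0 => Sa; apply/eqP; rewrite eq_le aS Sa.
Qed.

Lemma card_reps_prepend_sum : S != 0 -> (reps (prepend S x) S #= `I_2)%card.
Proof.
move=> S0; rewrite reps_prependE // subrr reps_sumE reps0E !image_set1.
by apply: card_set2 => /(congr1 (@^~ 0%N)).
Qed.

Lemma cardinal_range_prepend_sum : 0 < S ->
  cardinal_range (prepend S x) = cardinal_range x `|` [set CFin 2].
Proof.
move=> S_gt0; have S0 : S != 0 by rewrite gt_eqF.
have not_overlap a : achievement x a -> a != S -> ~ achievement x (a - S).
  by move=> xa /eqP aS /(achievement_overlap_sum xa).
apply/seteqP; split=> k.
  case=> a ya ak; have [aS|aS] := eqVneq a S.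
    by right; rewrite aS in ak; apply: card_is_finite (card_reps_prepend_sum S0) ak.
  left; have [|a' xa' ya_xa'] := card_reps_prepend S0 ya.
    by case=> xa; apply: not_overlap.
  by exists a' => //; apply: card_is_card_eq ak; apply: card_esym.
case=> [[a xa ak]|->]; last first.
  exists S; last exact: card_reps_prepend_sum.
  by rewrite achievement_prependE //; left; apply: achievement_sum.
have [aS|aS] := eqVneq a S; last first.
  exists a; first by rewrite achievement_prependE //; left.
  by apply: card_is_card_eq ak; apply: card_reps_prepend_l => //; apply: not_overlap.
(* f_x(S) = 1 reappears in y at 0 *)
exists 0; first by rewrite achievement_prependE //; left; apply: achievement0.
apply: card_is_card_eq ak; rewrite aS reps_sumE.
apply: card_eq_trans (card_reps_prepend_l _ _) _ => //.
  by move=> /achievement_ge0_le; rewrite sub0r oppr_ge0 leNgt S_gt0.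
by rewrite reps0E; apply: eq_card1.
Qed.

End NonnegSeries.

Lemma limit_pointS (T : topologicalType) (E F : set T) :
  E `<=` F -> limit_point E `<=` limit_point F.
Proof. by move=> EF z Ez B /Ez [y [yz /EF Fy By]]; exists y. Qed.

Section Translate.
Variables (R : realType) (c : R).
Implicit Types (E : set R) (w : R).

Lemma translate_add w E : translate c E (c + w) = E w.
Proof. by rewrite /translate /= addrC addKr. Qed.

Lemma translateE E : translate c E = (fun w => c + w) @` E.
Proof.
apply/seteqP; split=> z; last by case=> w Ew <-; rewrite translate_add.
by move=> Ez; exists (z - c) => //; rewrite addrC subrK.
Qed.

Lemma nbhs_addl w (P : set R) : nbhs (c + w) P <-> nbhs w (fun z => P (c + z)).
Proof. exact: (@nbhsDr _ R^o). Qed.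

Lemma interior_translate E w : (translate c E)° (c + w) <-> E° w.
Proof.
rewrite /interior /= nbhs_addl.
by rewrite (_ : (fun z => _) = E) //; apply/funext => z; rewrite translate_add.
Qed.

Lemma limit_point_translate E w : limit_point E w -> limit_point (translate c E) (c + w).
Proof.
move=> Ew B; rewrite nbhs_addl => /Ew [z [zw Ez Bz]].
by exists (c + z); rewrite translate_add (inj_eq (addrI c)).
Qed.

Lemma closure_translate E w : closure E w -> closure (translate c E) (c + w).
Proof.
move=> Ew B; rewrite nbhs_addl => /Ew [z [Ez Bz]].
by exists (c + z); split; rewrite ?translate_add.
Qed.

Lemma is_interval_translate E : is_interval E -> is_interval (translate c E).
Proof.
by move=> iE u v Eu Ev z /andP[uz zv]; apply: (iE _ _ Eu Ev); rewrite !lerD2r uz zv.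
Qed.

Lemma compact_translateU E : compact E -> compact (E `|` translate c E).
Proof.
move=> cE; apply: compactU => //; rewrite translateE; apply: continuous_compact => //.
by apply: continuous_subspaceT => z; apply: cvgD; [exact: cvg_cst|exact: cvg_id].
Qed.

Lemma closed_translateU E : compact E -> closed (E `|` translate c E).
Proof. by move=> cE; apply: compact_closed => //; exact: compact_translateU. Qed.

Lemma closure_interior_translateU E : compact E -> E = closure E° ->
  E `|` translate c E = closure (E `|` translate c E)°.
Proof.
move=> cE Eci; apply/seteqP; split=> z; last first.
  move=> /(closureS (@interior_subset _ _)).
  by move: (closed_translateU cE); rewrite closure_id => <-.
case=> [|]; first by rewrite {1}Eci; apply/closureS/interiorS/subsetUl.
rewrite /translate /= {1}Eci => /closure_translate; rewrite addrC subrK.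
apply: closureS => w Ew; apply: (@interiorS _ (translate c E)); first exact: subsetUr.
rewrite (_ : w = c + (w - c)); first exact/interior_translate.
by rewrite addrC subrK.
Qed.

Lemma perfect_set_translateU E : compact E -> perfect_set E ->
  perfect_set (E `|` translate c E).
Proof.
move=> cE [_ lE]; have cU := closed_translateU cE.
split => //; apply/seteqP; split=> z.
  by move/subset_limit_point; rewrite -(closure_id _).1.
case=> Ez; first by apply: (limit_pointS (@subsetUl _ _ _)); rewrite lE.
apply: (limit_pointS (@subsetUr _ _ _)); rewrite -[z](subrK c) addrC.
by apply: limit_point_translate; rewrite lE.
Qed.

(* An open subset of the union that is not inside the closed set E contains an
   open set disjoint from E, hence an open subset of the translate. *)
Lemma interior_translateU E : compact E -> E° = set0 -> (E `|` translate c E)° = set0.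
Proof.
move=> cE E0; apply/seteqP; split => // p Up; set V := (E `|` translate c E)°.
have [VE|/existsNP [q /not_implyP [Vq Eq]]] := pselect (V `<=` E).
  suff : E° p by rewrite E0.
  by apply: filterS VE _; apply: open_nbhs_nbhs; split => //; exact: open_interior.
suff : (translate c E)° q by rewrite -[q](subrK c) addrC interior_translate E0.
have VEc : nbhs q (V `&` ~` E).
  apply: open_nbhs_nbhs; split => //; apply: openI; first exact: open_interior.
  by apply: closed_openC; exact: compact_closed.
by apply: filterS VEc => z [/interior_subset [//|]].
Qed.

End Translate.

Lemma finite_union_intervals_translateU (R : realType) (c : R) (A : set R) :
  finite_union_intervals A -> finite_union_intervals (A `|` translate c A).
Proof.
case=> s [s0 [s_lt ->]]; exists (s ++ map (fun p => (c + p.1, c + p.2)) s).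
split; first by move: s0; case: (s).
split.
  by rewrite all_cat s_lt all_map; apply/allP => p /(allP s_lt) /=; rewrite ltrD2l.
apply/funext => t; apply/propext; rewrite /translate /= has_cat has_map.
set translated := preim _ _.
rewrite (@eq_has _ translated (fun p => (p.1 <= t - c) && (t - c <= p.2))).
  by split=> /orP.
by move=> p; rewrite /translated /= lerBrDl lerBlDl.
Qed.

Lemma cantor_set_translateU (R : realType) (c : R) (A : set R) :
  cantor_set A -> cantor_set (A `|` translate c A).
Proof.
case=> -[a Aa] [cA [pA iA]]; split; first by exists a; left.
split; first exact: compact_translateU.
by split; [exact: perfect_set_translateU|exact: interior_translateU].
Qed.

Section TranslateUnion.
Variables (R : realType) (S : R) (A : set R).
Hypothesis A_bnd : forall a, A a -> 0 <= a <= S.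
Hypothesis A0 : A 0.
Hypothesis AS : A S.

Let U := A `|` translate S A.
Let cc := @connected_component R.

Lemma single_interval_translateU : single_interval A -> single_interval U.
Proof.
case=> a [b [ab Aab]].
have [a0 bS] : a = 0 /\ b = S.
  have Aa : A a by rewrite Aab /= in_itv /= lexx ltW.
  have Ab : A b by rewrite Aab /= in_itv /= lexx ltW.
  move: A0 AS (A_bnd Aa) (A_bnd Ab); rewrite Aab /= !in_itv /=.
  by split; apply/eqP; rewrite eq_le; lra.
exists 0, (S + S); split; first lra.
rewrite /U Aab a0 bS; apply/funext => t; apply/propext; rewrite /translate /= !in_itv /=.
split; first by case=> /andP[? ?]; apply/andP; split; lra.
move=> /andP[t0 t2S]; have [tS|tS] := leP t S; first by left; apply/andP.
by right; apply/andP; split; lra.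
Qed.

Lemma U_le z : U z -> z <= S -> A z.
Proof.
case=> // Azs zS; have /andP[z_ge _] := A_bnd Azs.
by rewrite (_ : z = S) //; lra.
Qed.

Lemma U_ge z : U z -> S <= z -> A (z - S).
Proof.
case=> // Az zS; have /andP[_ zS'] := A_bnd Az.
by rewrite (_ : z - S = 0) //; lra.
Qed.

Lemma is_interval_cc (E : set R) p : is_interval (cc E p).
Proof. by apply/connected_intervalP; exact: component_connected. Qed.

Lemma cc_sub_ccU p : A p -> cc A p `<=` cc U p.
Proof.
move=> Ap; apply: connected_component_max; first exact: connected_component_refl.
  by move=> z /connected_component_sub; left.
exact: component_connected.
Qed.

Lemma translate_cc_sub_ccU w : A w -> translate S (cc A w) `<=` cc U (S + w).
Proof.
move=> Aw; apply: connected_component_max.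
- by rewrite translate_add; exact: connected_component_refl.
- by move=> z /connected_component_sub; right.
- by apply/connected_intervalP; apply: is_interval_translate; apply: is_interval_cc.
Qed.

Lemma le_sub_ccA t p : cc U t p -> p <= S -> [set z | cc U t z /\ z <= S] `<=` cc A p.
Proof.
move=> Kp pS; apply: connected_component_max => //.
  by move=> z [/connected_component_sub Uz zS]; apply: U_le.
apply/connected_intervalP => u v [Ku uS] [Kv vS] z /andP[uz zv].
by split; [apply: (is_interval_cc Ku Kv); rewrite uz zv|lra].
Qed.

Lemma ge_sub_translate_ccA t p : cc U t p -> S <= p ->
  [set z | cc U t z /\ S <= z] `<=` translate S (cc A (p - S)).
Proof.
move=> Kp pS z [Kz zS].
suff : [set w | cc U t (S + w) /\ 0 <= w] `<=` cc A (p - S).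
  by apply; rewrite /= subrKC; split => //; lra.
apply: connected_component_max.
- by rewrite /= subrKC; split => //; lra.
- move=> w [/connected_component_sub Uw w0].
  by have := U_ge Uw; rewrite addrAC subrr add0r; apply; lra.
- apply/connected_intervalP => u v [Ku u0] [Kv v0] w /andP[uw wv].
  by split; [apply: (is_interval_cc Ku Kv); rewrite !lerD2l uw wv|lra].
Qed.

Lemma one_point_components_translateU_l p :
  one_point_components A p -> p != S -> one_point_components U p.
Proof.
case=> Ap ccAp pS; split; first by left.
have pS' : p <= S by case/andP: (A_bnd Ap).
have ccUp : cc U p p by apply: connected_component_refl; left.
have KA := le_sub_ccA ccUp pS'.
apply/seteqP; split=> [q ccUq|q ->] //.
have [qS|qS] := leP q S; first by have := KA q (conj ccUq qS); rewrite /cc ccAp.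
have ccUS : cc U p S by apply: (is_interval_cc ccUp ccUq); rewrite pS' ltW.
have := KA S (conj ccUS (lexx S)); rewrite /cc ccAp => /= Sp.
by rewrite Sp eqxx in pS.
Qed.

Lemma one_point_components_translateU_r p :
  one_point_components A p -> p != 0 -> one_point_components U (S + p).
Proof.
case=> Ap ccAp p0; have UpS : U (S + p) by right; rewrite translate_add.
have Sp : S <= S + p by case/andP: (A_bnd Ap); rewrite lerDl.
have ccUp : cc U (S + p) (S + p) by apply: connected_component_refl.
have KB := ge_sub_translate_ccA ccUp Sp.
split => //; apply/seteqP; split=> [q ccUq|q ->] //.
have [Sq|Sq] := leP S q.
  have := KB q (conj ccUq Sq); rewrite addrAC subrr add0r /cc ccAp /translate /=.
  by move=> <-; rewrite subrKC.
have ccUS : cc U (S + p) S by apply: (is_interval_cc ccUq ccUp); rewrite Sp ltW.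
have := KB S (conj ccUS (lexx S)).
rewrite addrAC subrr add0r /cc ccAp /translate /= subrr => p0'.
by rewrite -p0' eqxx in p0.
Qed.

Lemma limit_point_translateU_l w : limit_point (one_point_components A) w ->
  limit_point (one_point_components U) w.
Proof.
move=> /(limit_point_setD (finite_set1 S)); apply: limit_pointS => z [Az zS].
by apply: one_point_components_translateU_l => //; apply/eqP.
Qed.

Lemma limit_point_translateU_r w :
  limit_point (translate S (one_point_components A)) w ->
  limit_point (one_point_components U) w.
Proof.
move=> /(limit_point_setD (finite_set1 S)); apply: limit_pointS => z [Az zS].
rewrite -(subrKC S z); apply: one_point_components_translateU_r => //.
by apply: contra_notN zS => /eqP /= z0; rewrite -(subrKC S z) z0 addr0.
Qed.

Lemma cc_le_itv p c d : U p -> cc U p = `[c, d]%classic -> p <= S ->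
  cc A p = `[c, Num.min d S]%classic.
Proof.
move=> Up ccUp pS; apply/seteqP; split=> z.
  move=> ccAz; have := cc_sub_ccU (U_le Up pS) ccAz.
  rewrite ccUp /= !in_itv /= le_min => /andP[-> ->] /=.
  by have /andP[] := A_bnd (connected_component_sub ccAz).
rewrite /= in_itv /= le_min => /and3P[cz zd zS].
apply: (le_sub_ccA (connected_component_refl Up) pS).
by rewrite ccUp /= in_itv /= cz zd.
Qed.

Lemma cc_ge_itv p c d : U p -> cc U p = `[c, d]%classic -> S <= p ->
  cc A (p - S) = `[Num.max c S - S, d - S]%classic.
Proof.
move=> Up ccUp pS; apply/seteqP; split=> z.
  move=> ccAz; have := translate_cc_sub_ccU (U_ge Up pS) (t := S + z).
  rewrite translate_add subrKC ccUp /= !in_itv /= => /(_ ccAz) /andP[cz zd].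
  have /andP[z0 _] := A_bnd (connected_component_sub ccAz).
  by apply/andP; split; [rewrite lerBlDl ge_max; apply/andP; split|]; lra.
rewrite /= in_itv /= lerBlDl ge_max => /andP[/andP[cz Sz] zd].
have ccUz : cc U p (S + z) by rewrite ccUp /= in_itv /=; apply/andP; split; lra.
have := ge_sub_translate_ccA (connected_component_refl Up) pS (conj ccUz Sz).
by rewrite translate_add.
Qed.

Hypothesis A_ends : forall t c d, A t -> cc A t = `[c, d]%classic -> c < d ->
  limit_point (one_point_components A) c /\ limit_point (one_point_components A) d.

Lemma limit_point_left_end t c d : U t -> cc U t = `[c, d]%classic -> c < d ->
  limit_point (one_point_components U) c.
Proof.
move=> Ut ccUt cd; have ccUtc : cc U t c by rewrite ccUt /= in_itv /= lexx ltW.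
have ccUc : cc U c = `[c, d]%classic by rewrite /cc -(same_connected_component ccUtc).
have Uc : U c := connected_component_sub ccUtc.
have [cS|Sc] := ltP c S.
  have cdS : c < Num.min d S by rewrite lt_min cd cS.
  have [+ _] := A_ends (U_le Uc (ltW cS)) (cc_le_itv Uc ccUc (ltW cS)) cdS.
  exact: limit_point_translateU_l.
have cdS : Num.max c S - S < d - S by rewrite (max_l Sc) ltrD2r.
have [+ _] := A_ends (U_ge Uc Sc) (cc_ge_itv Uc ccUc Sc) cdS.
rewrite (max_l Sc) => /(@limit_point_translate _ S); rewrite subrKC.
exact: limit_point_translateU_r.
Qed.

Lemma limit_point_right_end t c d : U t -> cc U t = `[c, d]%classic -> c < d ->
  limit_point (one_point_components U) d.
Proof.
move=> Ut ccUt cd; have ccUtd : cc U t d by rewrite ccUt /= in_itv /= lexx ltW.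
have ccUd : cc U d = `[c, d]%classic by rewrite /cc -(same_connected_component ccUtd).
have Ud : U d := connected_component_sub ccUtd.
have [dS|Sd] := leP d S.
  have cdS : c < Num.min d S by rewrite (min_l dS).
  have [_ +] := A_ends (U_le Ud dS) (cc_le_itv Ud ccUd dS) cdS.
  by rewrite (min_l dS); apply: limit_point_translateU_l.
have cdS : Num.max c S - S < d - S by rewrite ltrD2r gt_max cd Sd.
have [_ +] := A_ends (U_ge Ud (ltW Sd)) (cc_ge_itv Ud ccUd (ltW Sd)) cdS.
by move=> /(@limit_point_translate _ S); rewrite subrKC; apply: limit_point_translateU_r.
Qed.

End TranslateUnion.

Lemma cantorval_translateU (R : realType) (S : R) (A : set R) :
  (forall a, A a -> 0 <= a <= S) -> A 0 -> A S ->
  cantorval A -> cantorval (A `|` translate S A).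
Proof.
move=> A_bnd A0 AS [[a Aa] [cA [Aci A_ends]]]; split; first by exists a; left.
split; first exact: compact_translateU.
split; first exact: closure_interior_translateU.
move=> t c d Ut ccUt cd.
by split; [apply: limit_point_left_end ccUt cd|apply: limit_point_right_end ccUt cd].
Qed.

Section Admissible.
Variable R : realType.
Implicit Types (x : nat -> R) (c : R).

Lemma admissible_ge0 x : admissible x -> forall n, 0 <= x n.
Proof.
case=> [x_gt0 n|[k xk] n]; first exact: ltW.
by have [/(xk n).1/ltW|/(xk n).2->] := ltnP n k.
Qed.

Lemma finite_seq_prepend c x : 0 < c -> finite_seq x -> finite_seq (prepend c x).
Proof. by move=> c0 [k xk]; exists k.+1; case=> [|n] //=; rewrite !ltnS; exact: xk. Qed.

Lemma admissible_prepend c x : 0 < c -> admissible x -> admissible (prepend c x).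
Proof. by move=> c0 [x_gt0|/(finite_seq_prepend c0) ?]; [left; case|right]. Qed.

Lemma series_prepend c x S : series x @ \oo --> S ->
  series (prepend c x) @ \oo --> c + S.
Proof. by move=> x_sum; apply/series_recl; rewrite addrC addKr. Qed.

Lemma family_cond_prepend_sum J x S : (forall n, 0 <= x n) ->
  series x @ \oo --> S -> 0 < S -> family_cond J x -> family_cond J (prepend S x).
Proof.
move=> x_ge0 x_sum S_gt0; have A_bnd := achievement_ge0_le x_ge0 x_sum.
have A0 := achievement0 x_ge0; have AS := achievement_sum x_ge0 x_sum.
case: J => /=; first exact: finite_seq_prepend.
all: rewrite achievement_prependE ?gt_eqF //.
- exact: finite_union_intervals_translateU.
- exact: single_interval_translateU.
- exact: cantor_set_translateU.
- exact: cantorval_translateU.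
Qed.

Lemma family_cond_achievement0 J x : achievement x `<=` [set 0] ->
  family_cond J x -> J = FamF.
Proof.
move=> A0; case: J => //=.
- case=> -[|p s] [//= _ [/andP[p12 _] Ax]].
  have [Ap1 Ap2] : achievement x p.1 /\ achievement x p.2 by rewrite Ax /= !lexx ltW.
  by move: p12; rewrite (A0 _ Ap1) (A0 _ Ap2) ltxx.
- case=> a [b [ab Ax]].
  have [Aa Ab] : achievement x a /\ achievement x b by rewrite Ax /= !in_itv /= !lexx ltW.
  by move: ab; rewrite (A0 _ Aa) (A0 _ Ab) ltxx.
- move=> [[a Aa] [_ [[_ lA] _]]].
  have : limit_point (achievement x) a by rewrite lA.
  move=> /(_ setT filterT) [b [ba /A0 b0 _]].
  by move: ba; rewrite b0 (A0 _ Aa) eqxx.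
- move=> [[a Aa] [_ [Aci _]]].
  have [b Ab] : (achievement x)° !=set0.
    by apply/set0P/negP => /eqP Ai; move: Aa; rewrite Aci Ai closure0.
  by have := interiorS A0 Ab; rewrite interior_set1.
Qed.

Lemma cardinal_range_prepend1_null x : (forall n, 0 <= x n) -> series x @ \oo --> 0 ->
  cardinal_range (prepend 1 (prepend 1 x)) = cardinal_range x `|` [set CFin 2].
Proof.
move=> x_ge0 x_sum; have A_bnd := achievement_ge0_le x_ge0 x_sum.
have y_ge0 n : 0 <= prepend 1 x n by case: n => [|n] //=; exact: x_ge0.
have y_sum : series (prepend 1 x) @ \oo --> (1 : R).
  by rewrite -[X in _ --> X]addr0; exact: series_prepend.
rewrite (cardinal_range_prepend_sum y_ge0 y_sum ltr01).
congr (_ `|` _); apply: cardinal_range_prepend_disjoint (oner_neq0 _) _.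
by move=> a /A_bnd/andP[_ a_le0] /A_bnd/andP[a1_ge0 _]; lra.
Qed.

End Admissible.

Theorem lemma2p3 (R : realType) (J : family) (M : set card_val) :
  in_family R J M -> in_family R J (M `|` [set CFin 2]).
Proof.
case=> x [x_adm [S x_sum] x_fam <-]; have x_ge0 := admissible_ge0 x_adm.
have A_bnd := achievement_ge0_le x_ge0 x_sum.
have [S_gt0|S_le0] := ltP 0 S.
  exists (prepend S x); split; first exact: admissible_prepend.
  - by exists (S + S); apply: series_prepend.
  - exact: family_cond_prepend_sum.
  - exact: cardinal_range_prepend_sum.
have S0 : S = 0.
  by have /andP[_ S_ge0] := A_bnd _ (achievement0 x_ge0); apply/le_anti/andP.
subst S; have JF : J = FamF.
  apply: family_cond_achievement0 x_fam => a /A_bnd a0.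
  by apply/le_anti; rewrite andbC.
subst J; have y_fin : finite_seq (prepend 1 (prepend 1 x)).
  by do 2 apply: finite_seq_prepend (@ltr01 R) _.
exists (prepend 1 (prepend 1 x)); split => //; first by right.
  by exists (1 + (1 + 0)); do 2 apply: series_prepend.
exact: cardinal_range_prepend1_null.
Qed.
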